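(* Let a power network have node set $V$, initial active link set $\mathcal{E}^0$, link weights $w\in\mathbb{R}_{\ge0}^{\mathcal{E}^0}$, link capacities $c\in\mathbb{R}_{\ge0}^{\mathcal{E}^0}$, initial balanced supply-demand vector $p^0\in\mathcal{B}_{\mathcal{E}^0}$ and horizon $N\ge1$. Then for every $\epsilon>0$ there exists a feasible control sequence $\tilde u=(\tilde u^0,\dots,\tilde u^{N-1})\in\mathcal{D}(\mathcal{E}^0,p^0,N)$ such that $$\mathbb{J}_N(\mathcal{E}^0,\{p^0\})\ \ge\ s^\top\tilde u^{N-1}\ \ge\ \mathbb{J}_N(\mathcal{E}^0,\{p^0\})-\epsilon.$$
   Context: Network model. The network is a finite undirected multigraph with node set $V$ and link set $\mathcal{E}^0$ (arbitrary reference orientation of links). For $\mathcal{E}\subseteq\mathcal{E}^0$, let $A$ be the node–link incidence matrix of $(V,\mathcal{E})$, $W=\mathrm{diag}(w_i)_{i\in\mathcal{E}}$, $L(\mathcal{E})=AWA^\top$ with pseudo-inverse $L^\dagger(\mathcal{E})$. $\mathcal{B}_{\mathcal{E}}=\{u\in\mathbb{R}^V:\sum_{v\in V^{(i)}}u_v=0$ for every connected component $V^{(i)}$ of $(V,\mathcal{E})\}$. For $p\in\mathcal{B}_{\mathcal{E}}$, $f(\mathcal{E},p)=WA^\top L^\dagger(\mathcal{E})p$. $s\in\{1,0,-1\}^V$ equals $1$ on supply nodes, $-1$ on demand nodes, $0$ on other nodes. $\mathrm{sign}(x)=1$ if $x\ge0$, $-1$ otherwise; $\mathrm{cube}(p)=\{u\in\mathbb{R}^V:0\le\mathrm{sign}(p_v)u_v\le|p_v|\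 \forall v\}$, $\mathrm{cube}(P)=\bigcup_{p\in P}\mathrm{cube}(p)$; $U(\mathcal{E},p)=\mathrm{cube}(p)\cap\mathcal{B}_{\mathcal{E}}$, $U(\mathcal{E},P)=\mathcal{B}_{\mathcal{E}}\cap\mathrm{cube}(P)$. $\mathcal{F}_{\mathcal{E}}(\mathcal{E},u)=\{i\in\mathcal{E}:|f_i(\mathcal{E},u)|\le c_i\}$. Feasible states: $\mathcal{S}=\{(\mathcal{E},p):p\in\mathcal{B}_{\mathcal{E}},|f_i(\mathcal{E},p)|\le c_i\ \forall i\in\mathcal{E}\}$. Controlled cascade: $\mathcal{E}^{t+1}=\mathcal{F}_{\mathcal{E}}(\mathcal{E}^t,u^t)$, $p^{t+1}=u^t$, $u^t\in U(\mathcal{E}^t,p^t)$. $\mathcal{D}(\mathcal{E}^0,p^0,N)$ is the set of sequences $(u^0,\dots,u^{N-1})$ with $u^t\in U(\mathcal{E}^t,p^t)$ for $t=0,\dots,N-1$ and $(\mathcal{E}^{N-1},u^{N-1})\in\mathcal{S}$, where $(\mathcal{E}^t,p^t)$ are generated by the cascade. Aggregation: for $\beta\in\{-1,0,1\}^{\mathcal{E}}$, $U(\mathcal{E},P,\beta)=\{u\in U(\mathcal{E},P): f_i(\mathcal{E},u)<-c_i$ if $\beta_i=-1$; $|f_i(\mathcal{E},u)|\le c_i$ if $\beta_i=0$; $f_i(\mathcal{E},u)>c_i$ if $\beta_i=1\}$; $\mathbb{U}(\mathcal{E},P)$ is the collection of nonempty $U(\mathcal{E},P,\beta)$. $\mathcal{F}_{\mathcal{E}}(\mathcal{E},U)=\{i\in\mathcal{E}:|f_i(\mathcal{E},u)|\le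 c_i\ \forall u\in U\}$. $\mathbb{J}_1(\mathcal{E},P)=\max\{s^\top u:u\in U(\mathcal{E},\mathrm{cl}\,P),\ |f_i(\mathcal{E},u)|\le c_i\ \forall i\in\mathcal{E}\}$ and $\mathbb{J}_{t+1}(\mathcal{E},P)=\max_{U\in\mathbb{U}(\mathcal{E},P)}\mathbb{J}_t(\mathcal{F}_{\mathcal{E}}(\mathcal{E},U),U)$ for $t\in\{1,\dots,N-1\}$. *)

From HB Require Import structures.
From mathcomp Require Import all_boot all_order all_algebra.
From mathcomp Require Import all_classical all_reals all_analysis.
Set Implicit Arguments. Unset Strict Implicit. Unset Printing Implicit Defensive.
Import Order.TTheory GRing.Theory Num.Theory.
Import numFieldNormedType.Exports.
Local Open Scope classical_set_scope.
Local Open Scope ring_scope.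

Definition is_MPinv (R : realType) (k : nat) (M X : 'M[R]_k) : Prop :=
  [/\ M *m X *m M = M, X *m M *m X = X, (M *m X)^T = M *m X & (X *m M)^T = X *m M].

Definition MPinv (R : realType) (k : nat) (M : 'M[R]_k) : 'M[R]_k :=
  xget 0 [set X | is_MPinv M X].

Section Network.
Variables (R : realType) (n m : nat).
(* nodes are 'I_n, links are 'I_m; link i is oriented from src i to tgt i *)
Variables (src tgt : 'I_m -> 'I_n) (w c : 'I_m -> R).

Definition incid : 'M[R]_(n, m) :=
  \matrix_(v, i) ((v == src i)%:R - (v == tgt i)%:R).

(* weight matrix restricted to the active links E (inactive links get weight 0,
   which is the same as deleting the corresponding columns of the incidence matrix) *)
Definition Wmx (E : {set 'I_m}) : 'M[R]_m :=
  diag_mx (\row_i (if i \in E then w i else 0)).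

Definition Lap (E : {set 'I_m}) : 'M[R]_n := incid *m Wmx E *m incid^T.

Definition flow (E : {set 'I_m}) (p : 'cV[R]_n) : 'cV[R]_m :=
  Wmx E *m incid^T *m MPinv (Lap E) *m p.

Definition adj (E : {set 'I_m}) : rel 'I_n :=
  fun x y => [exists i in E, ((src i == x) && (tgt i == y)) || ((src i == y) && (tgt i == x))].

Definition balanced (E : {set 'I_m}) : set 'cV[R]_n :=
  [set u | forall v : 'I_n, \sum_(x | connect (adj E) v x) u x 0 = 0].

Definition sgn (x : R) : R := if 0 <= x then 1 else -1.

Definition cube (p : 'cV[R]_n) : set 'cV[R]_n :=
  [set u | forall v, 0 <= sgn (p v 0) * u v 0 <= `|p v 0|].

Definition cubeS (P : set 'cV[R]_n) : set 'cV[R]_n := \bigcup_(p in P) cube p.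

Definition Up (E : {set 'I_m}) (p : 'cV[R]_n) : set 'cV[R]_n := cube p `&` balanced E.
Definition UP (E : {set 'I_m}) (P : set 'cV[R]_n) : set 'cV[R]_n := balanced E `&` cubeS P.

Definition Fu (E : {set 'I_m}) (u : 'cV[R]_n) : {set 'I_m} :=
  [set i in E | `|flow E u i 0| <= c i].

Definition line_ok (E : {set 'I_m}) (u : 'cV[R]_n) : Prop :=
  forall i, i \in E -> `|flow E u i 0| <= c i.

Definition feasible (E : {set 'I_m}) (p : 'cV[R]_n) : Prop :=
  balanced E p /\ line_ok E p.

Fixpoint Eseq (E0 : {set 'I_m}) (u : nat -> 'cV[R]_n) (t : nat) : {set 'I_m} :=
  match t with
  | 0 => E0
  | t'.+1 => Fu (Eseq E0 u t') (u t')
  end.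

Definition pseq (p0 : 'cV[R]_n) (u : nat -> 'cV[R]_n) (t : nat) : 'cV[R]_n :=
  match t with
  | 0 => p0
  | t'.+1 => u t'
  end.

(* u in D(E0,p0,N) (only u 0, ..., u (N-1) matter) *)
Definition inD (E0 : {set 'I_m}) (p0 : 'cV[R]_n) (N : nat) (u : nat -> 'cV[R]_n) : Prop :=
  (forall t, (t < N)%N -> Up (Eseq E0 u t) (pseq p0 u t) (u t)) /\
  feasible (Eseq E0 u N.-1) (u N.-1).

Inductive tri := Neg | Zer | Pos.

Definition Ubeta (E : {set 'I_m}) (P : set 'cV[R]_n) (beta : 'I_m -> tri) : set 'cV[R]_n :=
  [set u | UP E P u /\ forall i, i \in E ->
     match beta i with
     | Neg => flow E u i 0 < - c i
     | Zer => `|flow E u i 0| <= c i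
     | Pos => flow E u i 0 > c i
     end].

Definition UU (E : {set 'I_m}) (P : set 'cV[R]_n) : set (set 'cV[R]_n) :=
  [set U | exists beta, U = Ubeta E P beta /\ U !=set0].

Definition FU (E : {set 'I_m}) (U : set 'cV[R]_n) : {set 'I_m} :=
  [set i in E | `[< forall u, U u -> `|flow E u i 0| <= c i >]].

Definition sdot (s u : 'cV[R]_n) : R := \sum_v s v 0 * u v 0.

(* Jagg k E P = J_{k+1}(E,P); max is rendered as sup (the maxima are attained) *)
Fixpoint Jagg (s : 'cV[R]_n) (k : nat) (E : {set 'I_m}) (P : set 'cV[R]_n) : R :=
  match k with
  | 0 => sup [set sdot s u | u in [set u | UP E (closure P) u /\ line_ok E u]]
  | k'.+1 => sup [set Jagg s k' (FU E U) U | U in UU E P]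
  end.

Definition JN (s : 'cV[R]_n) (N : nat) (E : {set 'I_m}) (P : set 'cV[R]_n) : R :=
  Jagg s N.-1 E P.

End Network.

From HB Require Import structures.
From mathcomp Require Import all_boot all_order all_algebra.
From mathcomp Require Import all_classical all_reals all_analysis.
From mathcomp Require Import lra.
Import Order.TTheory GRing.Theory Num.Theory.
Import numFieldNormedType.Exports.
Local Open Scope classical_set_scope.
Local Open Scope ring_scope.
Set Implicit Arguments. Unset Strict Implicit.

(* Every control in some U(E, P) with P inside the box |u_v| <= |p0_v| stays in that
   box, so all suprema defining J_N are finite, bounded by sum_v |p0_v|.  A block
   U(E, P, beta) fixes the status of every link, hence F_E of the block equals F_E of
   any of its members; this lets a control sequence be read through the aggregated
   recursion and gives s^T u^(N-1) <= J_N.  Conversely, descending the recursion with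
   eps/2-optimal blocks yields an admissible sequence, except at the last stage where
   the supremum runs over the closure of the current block: there a near-optimal x is
   replaced by l x with l < 1 close to 1, which lies in cube(q') for a point q' of the
   block close to the limit point, still meets the line limits, and loses little value. *)

Section Cube.
Variables (R : realType) (n : nat).
Implicit Types (P : set 'cV[R]_n) (p q u x : 'cV[R]_n).

Definition normBox p : set 'cV[R]_n := [set u | forall v, `|u v 0| <= `|p v 0|].

Definition l1norm p : R := \sum_v `|p v 0|.

Lemma l1norm_ge0 p : 0 <= l1norm p.
Proof. by apply: sumr_ge0 => v _; exact: normr_ge0. Qed.

Lemma normr_sgnM (a x : R) : `|sgn a * x| = `|x|.
Proof. by rewrite normrM /sgn; case: ifP; rewrite ?normrN normr1 mul1r. Qed.

Lemma cube_normBox p : cube p `<=` normBox p.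
Proof. by move=> u pu v; have /andP[u0 up] := pu v; rewrite -(normr_sgnM (p v 0)) ger0_norm. Qed.

Lemma cube0 p : cube p 0.
Proof. by move=> v; rewrite mxE mulr0 lexx normr_ge0. Qed.

Lemma sgn_box_scale_near (a b x l : R) : 0 <= l < 1 ->
  0 <= sgn a * x <= `|a| -> (a != 0 -> `|a - b| < (1 - l) * `|a|) ->
  0 <= sgn b * (l * x) <= `|b|.
Proof.
move=> /andP[l0 l1]; rewrite /sgn; have [a0 | a0] := lerP 0 a.
- rewrite mul1r (ger0_norm a0); have [-> | an0] := eqVneq a 0.
    by move=> /andP[x0 x0'] _; rewrite (@le_anti _ _ x 0) ?x0 ?x0' // !mulr0 lexx normr_ge0.
  move=> /andP[x0 xa] /(_ isT); rewrite ltr_norml => /andP[ab ba].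
  have b0 : 0 <= b by nra.
  by rewrite b0 mul1r ger0_norm //; apply/andP; split; nra.
- rewrite mulN1r (ltr0_norm a0) (lt_eqF a0) => /andP[x0 xa] /(_ isT).
  rewrite ltr_norml => /andP[ab ba].
  have b0 : b < 0 by nra.
  by rewrite (lt_geF b0) mulN1r ltr0_norm //; apply/andP; split; nra.
Qed.

Lemma cube_scale_near (l : R) q q' x : 0 <= l < 1 -> cube q x ->
  (forall v, q v 0 != 0 -> `|q v 0 - q' v 0| < (1 - l) * `|q v 0|) ->
  cube q' (l *: x).
Proof. by move=> l01 qx qq' v; rewrite mxE; exact: sgn_box_scale_near (qx v) (qq' v). Qed.

Lemma nonzero_entries_ge q :
  exists2 mu : R, 0 < mu & forall v, q v 0 != 0 -> mu <= `|q v 0|.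
Proof.
exists (\big[Num.min/1]_(v | q v 0 != 0) `|q v 0|).
  by elim/big_ind: _ => // [a b a0 b0|v]; [rewrite lt_min a0 b0 | rewrite normr_gt0].
by move=> v qv; rewrite bigmin_le_cond.
Qed.

Lemma closure_entrywise_near P q (d : R) : closure P q -> 0 < d ->
  exists2 q', P q' & forall v, `|q v 0 - q' v 0| < d.
Proof.
move=> Pq d0; have [q' [Pq' [_ qq']]] := Pq _ (nbhsx_ballx q d d0).
by exists q' => // v; exact: qq'.
Qed.

Lemma closure_normBox P p : P `<=` normBox p -> closure P `<=` normBox p.
Proof.
move=> Pp q Pq v; apply/ler_addgt0Pr => e e0.
have [q' /Pp/(_ v) q'p /(_ v) qq'] := closure_entrywise_near Pq e0.
have : `|q v 0| <= `|q' v 0| + `|q v 0 - q' v 0|.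
  by rewrite -[X in `|X|](subrK (q' v 0)) addrC ler_normD.
lra.
Qed.

(* A vanishing entry of [q] forces the same entry of [x] to vanish, so only the
   nonzero entries of [q] need approximating, with relative error [1 - l]. *)
Lemma cubeS_closure_scale P (l : R) x : 0 <= l < 1 ->
  cubeS (closure P) x -> cubeS P (l *: x).
Proof.
move=> l01 [q Pq qx]; have [mu mu0 qmu] := nonzero_entries_ge q.
have d0 : 0 < (1 - l) * mu by rewrite mulr_gt0 // subr_gt0; case/andP: l01.
have [q' Pq' qq'] := closure_entrywise_near Pq d0.
exists q' => //; apply: (cube_scale_near l01 qx) => v qv.
by rewrite (lt_le_trans (qq' v)) // ler_wpM2l ?qmu // subr_ge0 ltW //; case/andP: l01.
Qed.

End Cube.

Lemma scale_close (R : realType) (y M eps : R) : y <= M -> 0 <= M -> 0 < eps ->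
  exists2 l : R, 0 <= l < 1 & y - eps <= l * y.
Proof.
move=> yM M0 e0; set t := eps / (M + 1 + eps).
have t_eps : t * (M + 1 + eps) = eps by rewrite /t divfK // gt_eqF //; lra.
have t0 : 0 < t by rewrite /t divr_gt0 //; lra.
exists (1 - t); last nra.
by apply/andP; split; nra.
Qed.

Section Network.
Variables (R : realType) (n m : nat) (src tgt : 'I_m -> 'I_n) (w c : 'I_m -> R).
Hypothesis c_ge0 : forall i, 0 <= c i.

Local Notation flow := (flow src tgt w).
Local Notation balanced := (@balanced R n m src tgt).
Local Notation Up := (@Up R n m src tgt).
Local Notation UP := (@UP R n m src tgt).
Local Notation line_ok := (line_ok src tgt w c).
Local Notation Fu := (Fu src tgt w c).
Local Notation FU := (FU src tgt w c).
Local Notation Ubeta := (Ubeta src tgt w c).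
Local Notation UU := (UU src tgt w c).
Local Notation Eseq := (Eseq src tgt w c).
Local Notation inD := (inD src tgt w c).
Local Notation Jagg := (Jagg src tgt w c).

Implicit Types (E : {set 'I_m}) (P Q : set 'cV[R]_n) (p u x : 'cV[R]_n).

Lemma flowZ E (a : R) u : flow E (a *: u) = a *: flow E u.
Proof. by rewrite /flow scalemxAr. Qed.

Lemma line_ok0 E : line_ok E 0.
Proof. by move=> i _; rewrite /flow mulmx0 mxE normr0. Qed.

Lemma line_okZ E (a : R) u : 0 <= a <= 1 -> line_ok E u -> line_ok E (a *: u).
Proof.
move=> /andP[a0 a1] ok_u i iE; rewrite flowZ mxE normrM (ger0_norm a0).
by have := ok_u i iE; have := normr_ge0 (flow E u i 0); nra.
Qed.

Lemma balanced0 E : balanced E 0.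
Proof. by move=> v; rewrite big1 // => x _; rewrite mxE. Qed.

Lemma balancedZ E (a : R) u : balanced E u -> balanced E (a *: u).
Proof.
move=> bu v; under eq_bigr => x _ do rewrite mxE.
by rewrite -mulr_sumr bu mulr0.
Qed.

Lemma UP0 E P : P !=set0 -> UP E P 0.
Proof. by move=> [p Pp]; split; [exact: balanced0 | exists p => //; exact: cube0]. Qed.

Lemma UP_subset E P Q : P `<=` Q -> UP E P `<=` UP E Q.
Proof. by move=> PQ u [bu [q Pq qu]]; split => //; exists q; first exact: PQ. Qed.

Lemma UP_normBox E P p : P `<=` normBox p -> UP E P `<=` normBox p.
Proof. by move=> Pp u [_ [q Pq /cube_normBox qu]] v; exact: le_trans (qu v) (Pp q Pq v). Qed.

Lemma UP_set1 E p u : UP E [set p] u <-> Up E p u.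
Proof. by split=> [[bu [_ -> pu]] | [pu bu]]; split => //; exists p. Qed.

Lemma UP_closure_scale E P (l : R) x : 0 <= l < 1 ->
  UP E (closure P) x -> UP E P (l *: x).
Proof. by move=> l01 [bx Px]; split; [exact: balancedZ | exact: cubeS_closure_scale]. Qed.

Definition flow_pattern E u : 'I_m -> tri :=
  fun i => let f := flow E u i 0 in
    if `|f| <= c i then Zer else if f < - c i then Neg else Pos.

Lemma Ubeta_flow_pattern E P u : UP E P u -> Ubeta E P (flow_pattern E u) u.
Proof.
move=> Pu; split => // i iE; rewrite /flow_pattern.
set f := flow E u i 0; case: ifP => // /negbT; rewrite -ltNge ltr_normr => f_out.
by case: ifP => // /negbT; rewrite -leNgt; move: f_out; case/orP; lra.
Qed.

Lemma UU_flow_pattern E P u : UP E P u -> UU E P (Ubeta E P (flow_pattern E u)).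
Proof.
by move=> Pu; exists (flow_pattern E u); split => //; exists u; exact: Ubeta_flow_pattern.
Qed.

Lemma FU_Ubeta E P beta u : Ubeta E P beta u -> FU E (Ubeta E P beta) = Fu E u.
Proof.
move=> bu; apply/setP => i; rewrite !inE; case iE: (i \in E) => //=.
apply/asboolP/idP => [/(_ u bu) // | fu u' [_ beta_u']].
move: (bu.2 i iE) (beta_u' i iE) fu; rewrite ler_norml.
by case: (beta i) => //; lra.
Qed.

Lemma UU_normBox E P p U : P `<=` normBox p -> UU E P U -> U `<=` normBox p.
Proof. by move=> Pp [beta [-> _]] u [Pu _]; exact: UP_normBox Pp _ Pu. Qed.

Definition shift (u : nat -> 'cV[R]_n) t := u t.+1.

(* [admissible k E P u]: starting from the aggregated state [(E, P)], the controls
   [u 0, ..., u k] drive a cascade that ends in a feasible state. *)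
Fixpoint admissible k E P (u : nat -> 'cV[R]_n) : Prop :=
  UP E P (u 0%N) /\
  if k is k'.+1 then admissible k' (Fu E (u 0%N)) [set u 0%N] (shift u)
  else line_ok E (u 0%N).

Lemma Eseq_shift E (u : nat -> 'cV[R]_n) t :
  Eseq E u t.+1 = Eseq (Fu E (u 0%N)) (shift u) t.
Proof. by elim: t => //= t ->. Qed.

Lemma pseq_shift p (u : nat -> 'cV[R]_n) t : pseq p u t.+1 = pseq (u 0%N) (shift u) t.
Proof. by case: t. Qed.

Lemma admissible_inD k E p (u : nat -> 'cV[R]_n) :
  admissible k E [set p] u -> inD E p k.+1 u.
Proof.
elim: k E p u => [|k IH] E p u [/UP_set1 pu].
  by move=> ok_u; split=> [[] // _ | ]; last split => //; case: pu.
move=> /IH [sh_ok sh_feas]; split; last by rewrite succnK Eseq_shift.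
by case=> [// | t]; rewrite ltnS Eseq_shift pseq_shift; exact: sh_ok.
Qed.

Lemma admissible_UP k E P (u : nat -> 'cV[R]_n) :
  admissible k E P u -> UP E P (u 0%N).
Proof. by case: k => [|k] []. Qed.

Lemma admissible_head k E P Q (u : nat -> 'cV[R]_n) :
  UP E Q (u 0%N) -> admissible k E P u -> admissible k E Q u.
Proof. by case: k => [|k] Qu0 [_ u_ok]. Qed.

Section Value.
Variables (s p0 : 'cV[R]_n).
Hypothesis s_unit : forall v, s v 0 \in [:: 1; 0; -1].

Definition Jvals0 E P : set R :=
  [set sdot s u | u in [set u | UP E (closure P) u /\ line_ok E u]].

Definition Jvals k E P : set R := [set Jagg s k (FU E U) U | U in UU E P].

Lemma Jagg0E E P : Jagg s 0 E P = sup (Jvals0 E P).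
Proof. by []. Qed.

Lemma JaggSE k E P : Jagg s k.+1 E P = sup (Jvals k E P).
Proof. by []. Qed.

Lemma sdotZ (a : R) u : sdot s (a *: u) = a * sdot s u.
Proof. by rewrite /sdot mulr_sumr; apply: eq_bigr => v _; rewrite mxE mulrCA. Qed.

Lemma sdot_le_l1norm u : normBox p0 u -> sdot s u <= l1norm p0.
Proof.
move=> u_p0; apply: ler_sum => v _; have := u_p0 v.
move: (s_unit v); rewrite !inE => /or3P[] /eqP->; rewrite ?mul1r ?mul0r ?mulN1r.
- exact: le_trans (ler_norm _).
- by rewrite normr_ge0.
- by apply: le_trans; rewrite -normrN ler_norm.
Qed.

Lemma Jvals0_neq0 E P : P !=set0 -> Jvals0 E P !=set0.
Proof.
move=> [p Pp]; exists (sdot s 0), 0 => //; split; last exact: line_ok0.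
by apply: UP0; exists p; exact: subset_closure.
Qed.

Lemma Jvals0_ubound E P : P `<=` normBox p0 -> ubound (Jvals0 E P) (l1norm p0).
Proof.
move=> Pp0 _ [u [Pu _] <-]; apply: sdot_le_l1norm.
exact: UP_normBox (closure_normBox Pp0) _ Pu.
Qed.

Lemma Jvals_neq0 k E P : P !=set0 -> Jvals k E P !=set0.
Proof.
move=> /(UP0 E)/UU_flow_pattern UU0.
by apply: image_nonempty; exists (Ubeta E P (flow_pattern E 0)).
Qed.

Lemma Jagg_le_l1norm k E P : P `<=` normBox p0 -> P !=set0 ->
  Jagg s k E P <= l1norm p0.
Proof.
elim: k E P => [|k IH] E P Pp0 P_neq0.
  by rewrite Jagg0E; exact: ge_sup (Jvals0_neq0 E P_neq0) (Jvals0_ubound Pp0).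
rewrite JaggSE; apply: ge_sup (Jvals_neq0 k E P_neq0) _ => _ [U UU_U <-].
by apply: IH; [exact: UU_normBox UU_U | case: UU_U => ? []].
Qed.

Lemma has_sup_Jvals0 E P : P `<=` normBox p0 -> P !=set0 -> has_sup (Jvals0 E P).
Proof.
by move=> Pp0 P_neq0; split; [exact: Jvals0_neq0 | exists (l1norm p0); exact: Jvals0_ubound].
Qed.

Lemma has_sup_Jvals k E P : P `<=` normBox p0 -> P !=set0 -> has_sup (Jvals k E P).
Proof.
move=> Pp0 P_neq0; split; first exact: Jvals_neq0.
exists (l1norm p0) => _ [U UU_U <-].
by apply: Jagg_le_l1norm; [exact: UU_normBox UU_U | case: UU_U => ? []].
Qed.

Lemma sdot_le_Jagg k E P (u : nat -> 'cV[R]_n) : P `<=` normBox p0 ->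
  admissible k E P u -> sdot s (u k) <= Jagg s k E P.
Proof.
elim: k E P u => [|k IH] E P u Pp0 [Pu0 u_ok].
  rewrite Jagg0E; apply: ub_le_sup; first by exists (l1norm p0); exact: Jvals0_ubound.
  by exists (u 0%N) => //; split => //; exact: UP_subset (@subset_closure _ P) _ Pu0.
pose U := Ubeta E P (flow_pattern E (u 0%N)).
have UU_U : UU E P U := UU_flow_pattern Pu0.
have FU_U : FU E U = Fu E (u 0%N) := FU_Ubeta (Ubeta_flow_pattern Pu0).
have sh_ok : admissible k (FU E U) U (shift u).
  rewrite FU_U; apply: admissible_head (UP_subset _ (admissible_UP u_ok)) u_ok => _ ->.
  exact: Ubeta_flow_pattern.
have P_neq0 : P !=set0 by case: Pu0 => _ [q Pq _]; exists q.
rewrite JaggSE; apply: le_trans (IH _ _ _ (UU_normBox Pp0 UU_U) sh_ok) _.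
by apply: ub_le_sup; [case: (has_sup_Jvals k E Pp0 P_neq0) | exists U].
Qed.

Lemma Jagg_approx k E P (eps : R) : P `<=` normBox p0 -> P !=set0 -> 0 < eps ->
  exists u : nat -> 'cV[R]_n, admissible k E P u /\ Jagg s k E P - eps <= sdot s (u k).
Proof.
elim: k E P eps => [|k IH] E P eps Pp0 P_neq0 e0.
all: have e2 : 0 < eps / 2 by rewrite divr_gt0.
  have [_ [x [Px x_ok] <-] x_near] := sup_adherent e2 (has_sup_Jvals0 E Pp0 P_neq0).
  have x_le : sdot s x <= l1norm p0 by apply: (Jvals0_ubound (E := E) Pp0); exists x.
  have [l l01 lx] := scale_close x_le (l1norm_ge0 p0) e2.
  exists (fun=> l *: x); split; first split.
  - exact: UP_closure_scale.
  - by apply: line_okZ x_ok; case/andP: l01 => -> /ltW.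
  - by rewrite -Jagg0E in x_near; rewrite sdotZ; lra.
have [_ [U UU_U <-] U_near] := sup_adherent e2 (has_sup_Jvals k E Pp0 P_neq0).
have [beta [U_def U_neq0]] := UU_U.
have [u [u_ok u_near]] := IH (FU E U) U _ (UU_normBox Pp0 UU_U) U_neq0 e2.
have [bu0 [q Uq qu0]] := admissible_UP u_ok.
have FU_q : FU E U = Fu E q by rewrite U_def; apply: FU_Ubeta; rewrite -U_def.
exists (fun t => if t is t'.+1 then u t' else q); split.
  split; first by move: Uq; rewrite U_def => -[].
  by rewrite -FU_q; apply: admissible_head u_ok; split=> //; exists q.
by rewrite JaggSE /=; lra.
Qed.

End Value.

End Network.

Theorem proposition4 (R : realType) (n m : nat) (src tgt : 'I_m -> 'I_n)
  (w c : 'I_m -> R) (hw : forall i, 0 <= w i) (hc : forall i, 0 <= c i)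
  (s : 'cV[R]_n) (hs : forall v, s v 0 \in [:: 1; 0; -1])
  (p0 : 'cV[R]_n) (hp0 : balanced src tgt [set: 'I_m] p0)
  (N : nat) (hN : (1 <= N)%N) :
  forall eps : R, 0 < eps ->
  exists u : nat -> 'cV[R]_n,
    inD src tgt w c [set: 'I_m] p0 N u /\
    JN src tgt w c s N [set: 'I_m] [set p0] >= sdot s (u N.-1) /\
    sdot s (u N.-1) >= JN src tgt w c s N [set: 'I_m] [set p0] - eps.
Proof.
move=> eps e0.
have p0_box : [set p0] `<=` normBox p0 by move=> _ ->.
have p0_neq0 : [set p0] !=set0 by exists p0.
have [u [u_ok u_near]] := Jagg_approx src tgt w hc hs N.-1 [set: 'I_m]%SET p0_box p0_neq0 e0.
exists u; split; last split.
- by move: (admissible_inD u_ok); rewrite prednK.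
- exact: (sdot_le_Jagg hc hs p0_box u_ok).
- exact: u_near.
Qed.
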